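(* Let $L\ge 2$ and consider the tandem network of $L$ queues on a ring described in the context, in which a client served at queue $i$ moves to queue $i+1 \bmod L$. Fix $\lambda>0$ and, for each $i$, let $\pi_i^\lambda$ be a stationary probability distribution of the isolated queue $i$ fed by a Poisson arrival process of rate $\lambda$. Suppose that for every $i\in\{0,\dots,L-1\}$ and every $z_i\in E_i$ the following partial balance equations hold: $$\sum_{z\in V_i^+(z_i)}\mu(z)\,p_i^-(z,z_i)\,\pi_i^\lambda(z)=\lambda\,\pi_i^\lambda(z_i),$$ $$\mu(z_i)\pi_i^\lambda(z_i)+\sum_{z\in V_i^0(z_i)}q_i^0(z_i,z)\,\pi_i^\lambda(z_i)=\sum_{z\in V_i^-(z_i)}\lambda\,p_i^+(z,z_i)\,\pi_i^\lambda(z)+\sum_{z\in V_i^0(z_i)}q_i^0(z,z_i)\,\pi_i^\lambda(z).$$ Then for every integer $N\ge 0$ such that $Z_N:=\sum_{(z_0,\dots,z_{L-1})\in\Omega_N}\prod_{i}\pi_i^\lambda(z_i)>0$, where $\Omega_N=\{(z_0,\dots,z_{L-1})\in\prod_i E_i:\ \sum_i n(z_i)=N\}$, the probability measure on $\Omega_N$ $$P(z_0,\dots,z_{L-1})=\frac{\prod_{i=0}^{L-1}\pi_i^\lambda(z_i)}{Z_N}$$ (i.e. the product measure $\prod_i\pi_i^\lambda$ conditioned on the total number of clients being $N$) is a stationary distribution of the network dynamics restricted to $\Omega_N$.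
   Context: Queues with stochastic service rates. Each queue $i\in\{0,\dots,L-1\}$ has a countable state space $E_i\subset\mathbb N\times\mathbb R_+$; a state $z=(n,\mu)$ records the number of clients $n=n(z)$ and the current service rate $\mu=\mu(z)$, with $\mu(z)=0$ whenever $n(z)=0$. Write $V_i^+(z)=\{z'\in E_i: n(z')=n(z)+1\}$, $V_i^-(z)=\{z'\in E_i:n(z')=n(z)-1\}$, $V_i^0(z)=\{z'\in E_i: n(z')=n(z)\}$. For each $i$ there are transition probabilities $p_i^+(z,\cdot)$ on $V_i^+(z)$ (for all $z$) and $p_i^-(z,\cdot)$ on $V_i^-(z)$ (for $n(z)\ge1$), each summing to $1$, and nonnegative internal rates $q_i^0(z,z')$, $z'\in V_i^0(z)$. The isolated queue $i$ with arrival rate $\lambda$ is the continuous-time Markov chain on $E_i$ with jump rates $q_i(z,z')=\lambda p_i^+(z,z')\mathbf 1_{z'\in V_i^+(z)}+\mu(z)p_i^-(z,z')\mathbf 1_{z'\in V_i^-(z)}+q_i^0(z,z')\mathbf 1_{z'\in V_i^0(z)}$. The network is the continuous-time Markov chain on $\prod_i E_i$ in which: (a) for each $i$ with $n(z_i)\ge1$, at rate $\mu(z_i)p_i^-(z_i,z')p_{i+1}^+(z_{i+1},z'')$ (indices mod $L$) the state changes by $z_i\to z'\in V_i^-(z_i)$ and simultaneously $z_{i+1}\to z''\in V_{i+1}^+(z_{i+1})$; (b) for each $i$, at rate $q_i^0(z_i,z')$ the state changes by $z_i\to z'\in V_i^0(z_i)$, other coordinates unchanged. Total jump rates out of each state are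 assumed finite. The total number of clients is conserved, so the dynamics preserves each $\Omega_N$. *)

From Stdlib Require Import Reals.
From Stdlib Require List.
From Stdlib Require Import ClassicalDescription.
From mathcomp Require Import ssreflect ssrfun ssrbool eqtype ssrnat seq fintype bigop.

Set Implicit Arguments.
Unset Strict Implicit.

Local Open Scope R_scope.

Definition lsum {T : Type} (f : T -> R) (l : list T) : R :=
  List.fold_right (fun x acc => f x + acc) 0 l.

(** Unconditional summation of a real family over a subset [S] of an
    arbitrary type: [has_sum S f s] means the net of finite partial sums
    (over finite duplicate-free subsets of [S]) converges to [s]. *)
Definition has_sum {T : Type} (S : T -> Prop) (f : T -> R) (s : R) : Prop :=
  forall eps, 0 < eps ->
    exists l0 : list T,
      List.NoDup l0 /\ (forall x, List.In x l0 -> S x) /\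
      forall l : list T, List.NoDup l -> (forall x, List.In x l -> S x) ->
        (forall x, List.In x l0 -> List.In x l) ->
        Rabs (lsum f l - s) < eps.

Definition ind (P : Prop) : R :=
  if excluded_middle_informative P then 1 else 0.

Definition countable_set {T : Type} (S : T -> Prop) : Prop :=
  exists f : T -> nat, forall x y, S x -> S y -> f x = f y -> x = y.

(** Stationarity (global balance) of [P] for the continuous-time Markov chain
    on the state set [S] with off-diagonal jump rates [q x y] (x -> y):
    for every state x, the total rate out of x is finite and
    sum_{y <> x} P y q(y,x) = P x * sum_{y <> x} q(x,y). *)
Definition stationary_on {T : Type} (S : T -> Prop) (q : T -> T -> R)
  (P : T -> R) : Prop :=
  forall x, S x ->
    exists out : R,
      has_sum (fun y => S y /\ y <> x) (fun y => q x y) out /\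
      has_sum (fun y => S y /\ y <> x) (fun y => P y * q y x) (P x * out).

Definition stationary_distribution {T : Type} (S : T -> Prop)
  (q : T -> T -> R) (P : T -> R) : Prop :=
  (forall x, S x -> 0 <= P x) /\ has_sum S P 1 /\ stationary_on S q P.

(** A queue state is z = (n, mu) : nat * R, n = z.1 clients, rate mu = z.2.
    [E i] is the state space of queue i (a subset of nat * R). *)
Section Model.
Variable L : nat.
Variable E : 'I_L -> nat * R -> Prop.

Definition Vplus (i : 'I_L) (z z' : nat * R) : Prop := E i z' /\ z'.1 = z.1.+1.
Definition Vminus (i : 'I_L) (z z' : nat * R) : Prop := E i z' /\ z'.1.+1 = z.1.
Definition Vzero (i : 'I_L) (z z' : nat * R) : Prop := E i z' /\ z'.1 = z.1.

Variables (pplus pminus q0 : 'I_L -> nat * R -> nat * R -> R).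

Definition q_iso (lam : R) (i : 'I_L) (z z' : nat * R) : R :=
  (if z'.1 == z.1.+1 then lam * pplus i z z' else 0) +
  (if z'.1.+1 == z.1 then z.2 * pminus i z z' else 0) +
  (if z'.1 == z.1 then q0 i z z' else 0).

Definition net_state := 'I_L -> nat * R.

Definition q_net (x y : net_state) : R :=
  \big[Rplus/0]_(i < L)
    (ind (forall j, j <> i -> j <> ordS i -> y j = x j) *
     (if ((y i).1.+1 == (x i).1) && ((y (ordS i)).1 == (x (ordS i)).1.+1)
      then (x i).2 * pminus i (x i) (y i) * pplus (ordS i) (x (ordS i)) (y (ordS i))
      else 0))
  + \big[Rplus/0]_(i < L)
    (ind (forall j, j <> i -> y j = x j) *
     (if (y i).1 == (x i).1 then q0 i (x i) (y i) else 0)).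

Definition Omega (N : nat) (x : net_state) : Prop :=
  (forall i, E i (x i)) /\ (\sum_(i < L) (x i).1)%N = N.

Definition prod_measure (pi : 'I_L -> nat * R -> R) (x : net_state) : R :=
  \big[Rmult/1]_(i < L) pi i (x i).

End Model.

(* Under partial balance at every queue, the product measure
   [prod_i pi_i(z_i)] satisfies global balance on [Omega_N].  The jump rate
   [q_net x y] splits into a sum over the queues [i] of a service rate (a client
   moves from queue [i] to queue [i+1]) and an internal rate (queue [i] changes
   its service rate).  For a fixed [x] and [i]:
   - the outflow of each kind is a sum over the new states of one or two queues;
     it equals [mu(x_i)] for services (the routing kernels are stochastic) and the
     off-diagonal internal rate out of [x_i];
   - the inflow through services at [i] factorizes over the old states of queues
     [i] and [i+1]; the first partial balance equation at [i] collapses the first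
     factor, leaving the arrival flow into queue [i+1];
   - after reindexing [i -> i+1], the second partial balance equation at each queue
     equates total inflow and total outflow.
   Normalizing by [Z_N] then gives the theorem. *)

From Pilot Require Import Defs.
From Stdlib Require Import Reals Lra Lia Psatz FunctionalExtensionality.
From Stdlib Require Import ClassicalDescription.
From Stdlib Require ClassicalEpsilon.
From Stdlib Require List Permutation.
From mathcomp Require Import ssreflect ssrfun ssrbool eqtype ssrnat seq fintype bigop div.
From HB Require Import structures.

Local Open Scope R_scope.

Module UnconditionalSums.
Import List Permutation.
Arguments lsum {T} f l : simpl never.

Section FiniteSums.
Context {T : Type}.
Implicit Types (f g : T -> R) (l : list T).

Lemma lsum_cons f x l : lsum f (x :: l) = f x + lsum f l.
Proof. by []. Qed.

Lemma lsum_app f l1 l2 : lsum f (l1 ++ l2) = lsum f l1 + lsum f l2.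
Proof.
elim: l1 => [|x l IH] /=; first by rewrite /lsum /=; lra.
by rewrite !lsum_cons IH; lra.
Qed.

Lemma lsum_perm f l l' : Permutation l l' -> lsum f l = lsum f l'.
Proof.
elim => [//|x l1 l2 _ IH|x y l1|l1 l2 l3 _ H12 _ H23]; rewrite ?lsum_cons.
- by rewrite IH.
- lra.
- by rewrite H12 H23.
Qed.

Lemma lsum_ext f g l : (forall x, In x l -> f x = g x) -> lsum f l = lsum g l.
Proof.
elim: l => [//|x l IH] Hfg; rewrite !lsum_cons Hfg; last by left.
by rewrite IH // => y Hy; apply: Hfg; right.
Qed.

Lemma lsum_nonneg f l : (forall x, In x l -> 0 <= f x) -> 0 <= lsum f l.
Proof.
elim: l => [|x l IH] Hf; first by rewrite /lsum /=; lra.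
rewrite lsum_cons; have := Hf x (or_introl erefl).
have := IH (fun y Hy => Hf y (or_intror Hy)); lra.
Qed.

Lemma lsum_scale c f l : lsum (fun x => c * f x) l = c * lsum f l.
Proof.
elim: l => [|x l IH]; first by rewrite /lsum /=; lra.
by rewrite !lsum_cons IH; lra.
Qed.

Lemma lsum_add f g l : lsum (fun x => f x + g x) l = lsum f l + lsum g l.
Proof.
elim: l => [|x l IH]; first by rewrite /lsum /=; lra.
by rewrite !lsum_cons IH; lra.
Qed.

Definition cfilter (P : T -> Prop) l :=
  filter (fun x => if excluded_middle_informative (P x) then true else false) l.

Lemma In_cfilter P l x : In x (cfilter P l) <-> In x l /\ P x.
Proof.
rewrite /cfilter filter_In.
by case: excluded_middle_informative => HP; split; case.
Qed.

Lemma NoDup_cfilter P l : NoDup l -> NoDup (cfilter P l).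
Proof. exact: NoDup_filter. Qed.

Lemma lsum_cfilter f P l : (forall x, In x l -> ~ P x -> f x = 0) ->
  lsum f (cfilter P l) = lsum f l.
Proof.
elim: l => [//|x l IH] Hf; rewrite /cfilter /= -/(cfilter P l).
have IH' := IH (fun y Hy => Hf y (or_intror Hy)).
case: excluded_middle_informative => HP; rewrite !lsum_cons IH' //.
by rewrite Hf //; [lra | left].
Qed.

Definition lunion l1 l2 := l1 ++ cfilter (fun x => ~ In x l1) l2.

Lemma In_lunion l1 l2 x : In x (lunion l1 l2) <-> In x l1 \/ In x l2.
Proof.
rewrite /lunion in_app_iff In_cfilter.
by split; [tauto | case: (classic (In x l1)); tauto].
Qed.

Lemma NoDup_lunion {l1 l2} : NoDup l1 -> NoDup l2 -> NoDup (lunion l1 l2).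
Proof.
move=> N1 N2; apply: NoDup_app => //; first exact: NoDup_cfilter.
by move=> x Hx /In_cfilter [].
Qed.

Lemma lsum_incl f l1 l2 : NoDup l1 -> NoDup l2 -> incl l1 l2 ->
  (forall x, In x l2 -> 0 <= f x) -> lsum f l1 <= lsum f l2.
Proof.
move=> N1 N2 I12 Hf.
have Hperm : Permutation l2 (lunion l1 l2).
  apply: NoDup_Permutation => //; first exact: NoDup_lunion.
  by move=> x; rewrite In_lunion; split; [right | case => //; apply: I12].
rewrite (lsum_perm f _ _ Hperm) /lunion lsum_app.
have : 0 <= lsum f (cfilter (fun x => ~ In x l1) l2).
  by apply: lsum_nonneg => x /In_cfilter [/Hf].
lra.
Qed.

End FiniteSums.

Definition classical_eq_dec {T : Type} (x y : T) : {x = y} + {x <> y} :=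
  excluded_middle_informative (x = y).

Lemma lsum_map {A B : Type} (f : B -> R) (g : A -> B) l :
  lsum f (map g l) = lsum (fun x => f (g x)) l.
Proof. by elim: l => [//|a l IH] /=; rewrite !lsum_cons IH. Qed.

Lemma NoDup_prod {A B : Type} (l1 : list A) (l2 : list B) :
  NoDup l1 -> NoDup l2 -> NoDup (list_prod l1 l2).
Proof.
elim: l1 => [|a l IH] N1 N2 /=; first constructor.
move/NoDup_cons_iff: N1 => [Ha N1]; apply: NoDup_app; last 1 first.
- by move=> p /in_map_iff [b [<- _]] /in_prod_iff [].
- by apply: NoDup_map_NoDup_ForallPairs => // x y _ _ [].
- exact: IH.
Qed.

Lemma lsum_prod {A B : Type} (f : A -> R) (g : B -> R) l1 l2 :
  lsum (fun p => f p.1 * g p.2) (list_prod l1 l2) = lsum f l1 * lsum g l2.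
Proof.
elim: l1 => [|a l IH] /=; first by rewrite /lsum /=; lra.
rewrite lsum_app IH lsum_cons lsum_map /= lsum_scale; lra.
Qed.

Section HasSum.
Context {T : Type}.
Implicit Types (S : T -> Prop) (f g : T -> R).

Lemma has_sum_le {S f s} l : has_sum S f s -> (forall x, S x -> 0 <= f x) ->
  NoDup l -> (forall x, In x l -> S x) -> lsum f l <= s.
Proof.
move=> Hs Hf N Sl; apply: Rnot_lt_le => Hlt.
have [l0 [N0 [S0 H0]]] := Hs (lsum f l - s) ltac:(lra).
have Sl' : forall x, In x (lunion l l0) -> S x by move=> x /In_lunion [] ?; auto.
have := H0 _ (NoDup_lunion N N0) Sl' (fun x Hx => proj2 (In_lunion _ _ _) (or_intror Hx)).
have : lsum f l <= lsum f (lunion l l0).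
  apply: lsum_incl => //; first exact: NoDup_lunion.
  - by move=> x Hx; apply/In_lunion; left.
  - by move=> x /Sl' /Hf.
by move=> ? /Rabs_def2 []; lra.
Qed.

Lemma has_sum_ge0 {S f s} : has_sum S f s -> (forall x, S x -> 0 <= f x) -> 0 <= s.
Proof. by move=> Hs Hf; apply: (has_sum_le nil Hs Hf (NoDup_nil _)). Qed.

Lemma has_sum_sup S f s : (forall x, S x -> 0 <= f x) ->
  (forall l, NoDup l -> (forall x, In x l -> S x) -> lsum f l <= s) ->
  (forall eps, 0 < eps -> exists l,
     NoDup l /\ (forall x, In x l -> S x) /\ s - eps < lsum f l) ->
  has_sum S f s.
Proof.
move=> Hf Hub Happrox eps He; have [l0 [N0 [S0 L0]]] := Happrox eps He.
exists l0; split=> //; split=> // l N Sl I.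
have := Hub l N Sl; have : lsum f l0 <= lsum f l.
  by apply: lsum_incl => // x /Sl /Hf.
by move=> ? ?; apply: Rabs_def1; lra.
Qed.

Lemma has_sum_unique {S f a b} : has_sum S f a -> has_sum S f b -> a = b.
Proof.
have Hlt : forall a b, has_sum S f a -> has_sum S f b -> ~ a < b.
  move=> {}a {}b Ha Hb Hab.
  have [l1 [N1 [S1 H1]]] := Ha ((b - a) / 2) ltac:(lra).
  have [l2 [N2 [S2 H2]]] := Hb ((b - a) / 2) ltac:(lra).
  have N := NoDup_lunion N1 N2.
  have Sl : forall x, In x (lunion l1 l2) -> S x by move=> x /In_lunion [] ?; auto.
  have := H1 _ N Sl (fun x Hx => proj2 (In_lunion _ _ _) (or_introl Hx)).
  have := H2 _ N Sl (fun x Hx => proj2 (In_lunion _ _ _) (or_intror Hx)).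
  by move=> /Rabs_def2 [? ?] /Rabs_def2 [? ?]; lra.
move=> Ha Hb; case: (Rtotal_order a b) => [/(Hlt _ _ Ha Hb)|[//|/(Hlt _ _ Hb Ha)]] [].
Qed.

Lemma has_sum_ext {S S' f g s} : (forall x, S x <-> S' x) ->
  (forall x, S x -> f x = g x) -> has_sum S f s -> has_sum S' g s.
Proof.
move=> HS Hfg Hs eps He; have [l0 [N0 [S0 H0]]] := Hs eps He.
exists l0; split=> //; split; first by move=> x /S0 /HS.
move=> l N Sl I; rewrite -(@lsum_ext _ f g); last by move=> x /Sl /HS /Hfg.
by apply: H0 => // x /Sl /HS.
Qed.

Lemma has_sum_add {S f g a b} : has_sum S f a -> has_sum S g b ->
  has_sum S (fun x => f x + g x) (a + b).
Proof.
move=> Ha Hb eps He.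
have [l1 [N1 [S1 H1]]] := Ha (eps / 2) ltac:(lra).
have [l2 [N2 [S2 H2]]] := Hb (eps / 2) ltac:(lra).
exists (lunion l1 l2); split; first exact: NoDup_lunion.
split; first by move=> x /In_lunion [] ?; auto.
move=> l N Sl I; rewrite lsum_add.
have := H1 l N Sl (fun x Hx => I x (proj2 (In_lunion _ _ _) (or_introl Hx))).
have := H2 l N Sl (fun x Hx => I x (proj2 (In_lunion _ _ _) (or_intror Hx))).
by move=> /Rabs_def2 [? ?] /Rabs_def2 [? ?]; apply: Rabs_def1; lra.
Qed.

Lemma has_sum_scale {S f a} c : has_sum S f a -> has_sum S (fun x => c * f x) (c * a).
Proof.
move=> Ha eps He; have Hc : 0 < Rabs c + 1 by have := Rabs_pos c; lra.
have [l1 [N1 [S1 H1]]] := Ha (eps / (Rabs c + 1)) ltac:(apply: Rdiv_lt_0_compat; lra).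
exists l1; split=> //; split=> // l N Sl I.
rewrite lsum_scale -Rmult_minus_distr_l Rabs_mult.
apply: (Rle_lt_trans _ ((Rabs c + 1) * Rabs (lsum f l - a))).
  by apply: Rmult_le_compat_r; [apply: Rabs_pos | lra].
have -> : eps = (Rabs c + 1) * (eps / (Rabs c + 1)) by field; lra.
by apply: Rmult_lt_compat_l => //; apply: H1.
Qed.

Lemma has_sum_zero {S f} : (forall x, S x -> f x = 0) -> has_sum S f 0.
Proof.
move=> Hf eps He; exists nil; split; first constructor; split=> // l _ Sl _.
rewrite (@lsum_ext _ f (fun _ => 0 * 0)); last by move=> x /Sl /Hf ->; ring.
by rewrite lsum_scale Rmult_0_l Rminus_0_r Rabs_R0.
Qed.

Lemma has_sum_restrict {S S' f s} : (forall x, S' x -> S x) ->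
  (forall x, S x -> ~ S' x -> f x = 0) -> has_sum S' f s -> has_sum S f s.
Proof.
move=> Hsub Hf0 Hs eps He; have [l0 [N0 [S0 L0]]] := Hs eps He.
exists l0; split=> //; split; first by move=> x /S0 /Hsub.
move=> l N Sl I; rewrite -(@lsum_cfilter _ f S'); last by move=> x /Sl; apply: Hf0.
apply: L0; first exact: NoDup_cfilter.
- by move=> x /In_cfilter [].
- by move=> x Hx; apply/In_cfilter; split; [apply: I | apply: S0].
Qed.

Lemma has_sum_remove {S f s x0} : S x0 -> has_sum S f s ->
  has_sum (fun x => S x /\ x <> x0) f (s - f x0).
Proof.
move=> Sx0 Hs eps He; have [l0 [N0 [S0 L0]]] := Hs eps He.
exists (cfilter (fun x => x <> x0) l0); split; first exact: NoDup_cfilter.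
split; first by move=> x /In_cfilter [/S0].
move=> l N Sl I.
have N' : NoDup (x0 :: l) by constructor=> // /Sl [].
have -> : lsum f l - (s - f x0) = lsum f (x0 :: l) - s by rewrite lsum_cons; ring.
apply: L0 => //; first by move=> x [<- | /Sl []].
move=> x Hx; case: (classic (x = x0)) => [-> | Hne]; [by left | right].
by apply: I; apply/In_cfilter.
Qed.

End HasSum.

Lemma has_sum_bij {A B : Type} {SA : A -> Prop} {SB : B -> Prop}
  (phi : A -> B) (psi : B -> A) {g : B -> R} {s} :
  (forall a, SA a -> SB (phi a)) -> (forall a, SA a -> psi (phi a) = a) ->
  (forall b, SB b -> SA (psi b) /\ phi (psi b) = b) ->
  has_sum SA (fun a => g (phi a)) s -> has_sum SB g s.
Proof.
move=> Hphi Hpsiphi Hphipsi Hs eps He; have [l0 [N0 [S0 L0]]] := Hs eps He.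
exists (map phi l0); split.
  apply: NoDup_map_NoDup_ForallPairs => // x y /S0 Hx /S0 Hy Exy.
  by rewrite -(Hpsiphi x Hx) -(Hpsiphi y Hy) Exy.
split; first by move=> b /in_map_iff [a [<- /S0 /Hphi]].
move=> l N Sl I.
have -> : l = map phi (map psi l).
  rewrite map_map -{1}(map_id l); apply: map_ext_in => b /Sl /Hphipsi [_ ->] //.
rewrite lsum_map; apply: L0.
- apply: NoDup_map_NoDup_ForallPairs => // x y /Sl Hx /Sl Hy Exy.
  by rewrite -(proj2 (Hphipsi x Hx)) -(proj2 (Hphipsi y Hy)) Exy.
- by move=> a /in_map_iff [b [<- /Sl /Hphipsi []]].
- move=> a Ha; apply/in_map_iff; exists (phi a); split; first by apply/Hpsiphi/S0.
  by apply: I; apply/in_map_iff; exists a.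
Qed.

Lemma has_sum_prod {A B : Type} {SA : A -> Prop} {SB : B -> Prop}
  {f : A -> R} {g : B -> R} {a b} :
  (forall x, SA x -> 0 <= f x) -> (forall y, SB y -> 0 <= g y) ->
  has_sum SA f a -> has_sum SB g b ->
  has_sum (fun p => SA p.1 /\ SB p.2) (fun p => f p.1 * g p.2) (a * b).
Proof.
move=> Hf Hg Ha Hb; have a0 := has_sum_ge0 Ha Hf; have b0 := has_sum_ge0 Hb Hg.
apply: has_sum_sup.
- by move=> p [? ?]; apply: Rmult_le_pos; auto.
- move=> l N Sl.
  set l1 := nodup classical_eq_dec (map fst l); set l2 := nodup classical_eq_dec (map snd l).
  have S1 : forall x, In x l1 -> SA x by move=> x /nodup_In /in_map_iff [p [<- /Sl []]].
  have S2 : forall y, In y l2 -> SB y by move=> y /nodup_In /in_map_iff [p [<- /Sl []]].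
  apply: (Rle_trans _ (lsum (fun p => f p.1 * g p.2) (list_prod l1 l2))).
    apply: lsum_incl => //; first by apply: NoDup_prod; apply: NoDup_nodup.
    + move=> [x y] Hp; apply: in_prod; apply/nodup_In/in_map_iff; by exists (x, y).
    + by move=> [x y] /in_prod_iff [/S1 ? /S2 ?]; apply: Rmult_le_pos; auto.
  rewrite lsum_prod; apply: Rmult_le_compat.
  + by apply: lsum_nonneg => x /S1; auto.
  + by apply: lsum_nonneg => x /S2; auto.
  + by apply: (has_sum_le _ Ha Hf) => //; apply: NoDup_nodup.
  + by apply: (has_sum_le _ Hb Hg) => //; apply: NoDup_nodup.
- move=> eps He; set d := eps / (a + b + 1).
  have Hd : 0 < d by apply: Rdiv_lt_0_compat; lra.
  have [l1 [N1 [S1 H1]]] := Ha d Hd; have [l2 [N2 [S2 H2]]] := Hb d Hd.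
  exists (list_prod l1 l2); split; first exact: NoDup_prod.
  split; first by move=> [x y] /in_prod_iff [/S1 ? /S2 ?].
  rewrite lsum_prod.
  have /Rabs_def2 [A1 A2] := H1 l1 N1 S1 (fun x h => h).
  have /Rabs_def2 [B1 B2] := H2 l2 N2 S2 (fun x h => h).
  have ub1 := has_sum_le _ Ha Hf N1 S1; have ub2 := has_sum_le _ Hb Hg N2 S2.
  have p2 : 0 <= lsum g l2 by apply: lsum_nonneg => y /S2; auto.
  have Hed : eps = (a + b + 1) * d by rewrite /d; field; lra.
  move: A1 A2 B1 B2 ub1 ub2 p2; move: (lsum f l1) (lsum g l2) => x y *.
  have E2 : a * (b - y) <= a * d by apply: Rmult_le_compat_l; lra.
  have E3 : y * (a - x) <= b * d.
    apply: (Rle_trans _ (y * d)); first by apply: Rmult_le_compat_l; lra.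
    by apply: Rmult_le_compat_r; lra.
  nra.
Qed.

End UnconditionalSums.
Import UnconditionalSums.

HB.instance Definition _ := Monoid.isComLaw.Build R 0 Rplus
  (fun x y z => esym (Rplus_assoc x y z)) Rplus_comm Rplus_0_l.
HB.instance Definition _ := Monoid.isComLaw.Build R 1 Rmult
  (fun x y z => esym (Rmult_assoc x y z)) Rmult_comm Rmult_1_l.

Lemma sumR_scale {I : Type} (c : R) (s : seq I) (F : I -> R) :
  c * \big[Rplus/0]_(i <- s) F i = \big[Rplus/0]_(i <- s) (c * F i).
Proof. by elim: s => [|i s IH]; rewrite ?big_nil ?big_cons; [ring | rewrite -IH; ring]. Qed.

Lemma has_sum_bigsum {I T : Type} {S : T -> Prop} (s : seq I) {F : I -> T -> R} {a : I -> R} :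
  (forall i, has_sum S (F i) (a i)) ->
  has_sum S (fun y => \big[Rplus/0]_(i <- s) F i y) (\big[Rplus/0]_(i <- s) a i).
Proof.
move=> HF; elim: s => [|i s IH].
- by rewrite big_nil; apply: has_sum_zero => y _; rewrite big_nil.
- by rewrite big_cons; apply: has_sum_ext (has_sum_add (HF i) IH) => // y _; rewrite big_cons.
Qed.

Lemma stationary_on_scale {T : Type} (S : T -> Prop) (q : T -> T -> R) (P : T -> R) c :
  stationary_on S q P -> stationary_on S q (fun x => P x / c).
Proof.
move=> HP x Sx; have [out [Hout Hin]] := HP x Sx.
exists out; split=> //.
have -> : P x / c * out = / c * (P x * out) by rewrite /Rdiv; ring.
by apply: has_sum_ext (has_sum_scale (/ c) Hin) => // y _; rewrite /Rdiv; ring.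
Qed.

Lemma ind_true (P : Prop) : P -> Defs.ind P = 1.
Proof. by move=> HP; unfold Defs.ind; destruct (excluded_middle_informative P). Qed.

Lemma ind_false (P : Prop) : ~ P -> Defs.ind P = 0.
Proof. by move=> HnP; unfold Defs.ind; destruct (excluded_middle_informative P). Qed.

Section TandemNetwork.
Context {L : nat} (HL : (2 <= L)%N) {E : 'I_L -> nat * R -> Prop}.

Lemma ordS_neq (i : 'I_L) : ordS i != i.
Proof.
apply/eqP => /(f_equal val) /=; have Hi := ltn_ord i.
case: (ltngtP i.+1 L) => HiL.
- by rewrite modn_small // => /eqP; rewrite -[X in _ == X]addn0 -addn1 eqn_add2l.
- by rewrite ltnNge Hi in HiL.
- by rewrite HiL modnn => Hi0; move: HL; rewrite -HiL -Hi0.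
Qed.

Definition set1 (x : net_state L) (i : 'I_L) (a : nat * R) : net_state L :=
  fun j => if j == i then a else x j.

Definition set2 (x : net_state L) (i : 'I_L) (p : (nat * R) * (nat * R)) : net_state L :=
  fun j => if j == i then p.1 else if j == ordS i then p.2 else x j.

Lemma set1_at x i a : set1 x i a i = a.
Proof. by rewrite /set1 eqxx. Qed.

Lemma set1_off x i a j : j <> i -> set1 x i a j = x j.
Proof. by move=> /eqP/negbTE Hj; rewrite /set1 Hj. Qed.

Lemma set1_eta {x i y} : (forall j, j <> i -> y j = x j) -> set1 x i (y i) = y.
Proof.
move=> Hy; apply: functional_extensionality => j; rewrite /set1.
by case: (eqVneq j i) => [-> // | /eqP /Hy ->].
Qed.

Lemma set2_at x i p : set2 x i p i = p.1.
Proof. by rewrite /set2 eqxx. Qed.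

Lemma set2_next x i p : set2 x i p (ordS i) = p.2.
Proof. by rewrite /set2 (negbTE (ordS_neq i)) eqxx. Qed.

Lemma set2_off x i p j : j <> i -> j <> ordS i -> set2 x i p j = x j.
Proof. by move=> /eqP/negbTE Hi /eqP/negbTE HS; rewrite /set2 Hi HS. Qed.

Lemma set2_eta {x i y} : (forall j, j <> i -> j <> ordS i -> y j = x j) ->
  set2 x i (y i, y (ordS i)) = y.
Proof.
move=> Hy; apply: functional_extensionality => j; rewrite /set2.
case: (eqVneq j i) => [-> // | /eqP Hi]; case: (eqVneq j (ordS i)) => [-> // | /eqP HS].
by rewrite Hy.
Qed.

Lemma Omega_set1 N x i a : Omega E N x -> E i a -> a.1 = (x i).1 ->
  Omega E N (set1 x i a).
Proof.
move=> [Ex <-] Ea Ha; split => [j|].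
- by rewrite /set1; case: (eqVneq j i) => [-> |].
- by apply: eq_bigr => j _; rewrite /set1; case: (eqVneq j i) => [-> |].
Qed.

Lemma Omega_set2 N x i a b : Omega E N x -> E i a -> E (ordS i) b ->
  (a.1 + b.1 = (x i).1 + (x (ordS i)).1)%N -> Omega E N (set2 x i (a, b)).
Proof.
move=> [Ex <-] Ea Eb Hab; split => [j|].
- case: (eqVneq j i) => [-> | /eqP Hi]; first by rewrite set2_at.
  case: (eqVneq j (ordS i)) => [-> | /eqP HS]; first by rewrite set2_next.
  by rewrite set2_off.
- have Hne := ordS_neq i.
  rewrite (bigD1 i) // (bigD1 (ordS i)) //= [RHS](bigD1 i) // [in RHS](bigD1 (ordS i)) //=.
  rewrite set2_at set2_next !addnA Hab; congr (_ + _)%N.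
  by apply: eq_bigr => j /andP [/eqP Hi /eqP HS]; rewrite set2_off.
Qed.

Lemma has_sum_one_site {N x i} (A : nat * R -> Prop) {F : net_state L -> R} {s} :
  (forall a, A a -> Omega E N (set1 x i a)) ->
  (forall y, Omega E N y -> y <> x -> F y <> 0 ->
     (forall j, j <> i -> y j = x j) /\ A (y i)) ->
  has_sum (fun a => A a /\ a <> x i) (fun a => F (set1 x i a)) s ->
  has_sum (fun y => Omega E N y /\ y <> x) F s.
Proof.
move=> Hset Hsupp Hs.
apply: (has_sum_restrict
  (S' := fun y => (forall j, j <> i -> y j = x j) /\ A (y i) /\ y i <> x i)).
- move=> y [Hy [HA Hne]]; have HOm := Hset _ HA; rewrite (set1_eta Hy) in HOm.
  by split => // Heq; apply: Hne; rewrite Heq.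
- move=> y [HOm Hne] HnT; case: (Req_dec (F y) 0) => // Hnz.
  have [Hagree HA] := Hsupp y HOm Hne Hnz; case: HnT; split => //; split => // Hyi.
  by apply: Hne; rewrite -(set1_eta Hagree) Hyi (set1_eta (fun _ _ => erefl)).
- apply: (has_sum_bij (set1 x i) (fun y => y i) _ _ _ Hs).
  + by move=> a HA; rewrite set1_at; split => // j; apply: set1_off.
  + by move=> a _; rewrite set1_at.
  + by move=> y [Hy HA]; rewrite set1_eta.
Qed.

Lemma has_sum_two_site {N x i} (A B : nat * R -> Prop) {F : net_state L -> R} {s} :
  (forall a b, A a -> B b -> Omega E N (set2 x i (a, b)) /\ a <> x i) ->
  (forall y, Omega E N y -> y <> x -> F y <> 0 ->
     (forall j, j <> i -> j <> ordS i -> y j = x j) /\ A (y i) /\ B (y (ordS i))) ->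
  has_sum (fun p => A p.1 /\ B p.2) (fun p => F (set2 x i p)) s ->
  has_sum (fun y => Omega E N y /\ y <> x) F s.
Proof.
move=> Hset Hsupp Hs.
apply: (has_sum_restrict (S' := fun y =>
  (forall j, j <> i -> j <> ordS i -> y j = x j) /\ A (y i) /\ B (y (ordS i)))).
- move=> y [Hy [HA HB]]; have [HOm Hne] := Hset _ _ HA HB.
  rewrite (set2_eta Hy) in HOm.
  by split => // Heq; apply: Hne; rewrite Heq.
- move=> y [HOm Hne] HnT; case: (Req_dec (F y) 0) => // Hnz.
  by case: HnT; apply: Hsupp.
- apply: (has_sum_bij (set2 x i) (fun y => (y i, y (ordS i))) _ _ _ Hs).
  + move=> [a b] [HA HB]; rewrite set2_at set2_next; split => // j.
    exact: set2_off.
  + by move=> [a b] _; rewrite set2_at set2_next.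
  + by move=> y [Hy [HA HB]]; rewrite set2_eta.
Qed.

Definition prod_except1 (pi : 'I_L -> nat * R -> R) (x : net_state L) (i : 'I_L) : R :=
  \big[Rmult/1]_(j < L | j != i) pi j (x j).
Definition prod_except2 (pi : 'I_L -> nat * R -> R) (x : net_state L) (i : 'I_L) : R :=
  \big[Rmult/1]_(j < L | (j != i) && (j != ordS i)) pi j (x j).

Lemma prod_measure_split pi x i : prod_measure pi x = pi i (x i) * prod_except1 pi x i.
Proof. by rewrite /prod_measure (bigD1 i). Qed.

Lemma prod_except1_split pi x i :
  prod_except1 pi x i = pi (ordS i) (x (ordS i)) * prod_except2 pi x i.
Proof. by rewrite /prod_except1 (bigD1 (ordS i)) //= ordS_neq. Qed.

Lemma prod_except1_next pi x i : prod_except1 pi x (ordS i) = pi i (x i) * prod_except2 pi x i.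
Proof.
rewrite /prod_except1 (bigD1 i) /=; last by rewrite eq_sym ordS_neq.
by congr (_ * _); apply: eq_bigl => j; rewrite andbC.
Qed.

Lemma prod_measure_set1 pi x i a : prod_measure pi (set1 x i a) = pi i a * prod_except1 pi x i.
Proof.
rewrite (prod_measure_split _ _ i) set1_at; congr (_ * _).
by apply: eq_bigr => j /eqP Hj; rewrite set1_off.
Qed.

Lemma prod_measure_set2 pi x i p :
  prod_measure pi (set2 x i p) = pi i p.1 * (pi (ordS i) p.2 * prod_except2 pi x i).
Proof.
rewrite (prod_measure_split _ _ i) prod_except1_split set2_at set2_next; congr (_ * (_ * _)).
by apply: eq_bigr => j /andP [/eqP Hi /eqP HS]; rewrite set2_off.
Qed.

Lemma prod_measure_nonneg pi x : (forall i z, E i z -> 0 <= pi i z) ->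
  (forall i, E i (x i)) -> 0 <= prod_measure pi x.
Proof.
move=> Hpi Ex; apply: (big_ind (fun v => 0 <= v)); first lra.
- by move=> a b; apply: Rmult_le_pos.
- by move=> j _; apply: Hpi.
Qed.

Context {pplus pminus q0 : 'I_L -> nat * R -> nat * R -> R}.

Definition service_rate (x y : net_state L) (i : 'I_L) : R :=
  Defs.ind (forall j, j <> i -> j <> ordS i -> y j = x j) *
  (if ((y i).1.+1 == (x i).1) && ((y (ordS i)).1 == (x (ordS i)).1.+1)
   then (x i).2 * pminus i (x i) (y i) * pplus (ordS i) (x (ordS i)) (y (ordS i))
   else 0).

Definition internal_rate (x y : net_state L) (i : 'I_L) : R :=
  Defs.ind (forall j, j <> i -> y j = x j) *
  (if (y i).1 == (x i).1 then q0 i (x i) (y i) else 0).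

Lemma q_net_split x y : q_net pplus pminus q0 x y =
  \big[Rplus/0]_(i < L) service_rate x y i + \big[Rplus/0]_(i < L) internal_rate x y i.
Proof. by []. Qed.

Lemma service_rate_support x y i : service_rate x y i <> 0 ->
  (forall j, j <> i -> j <> ordS i -> y j = x j) /\
  (y i).1.+1 = (x i).1 /\ (y (ordS i)).1 = (x (ordS i)).1.+1.
Proof.
rewrite /service_rate => Hnz.
case: (classic (forall j, j <> i -> j <> ordS i -> y j = x j)) => Hagree;
  last by case: Hnz; rewrite ind_false //; ring.
move: Hnz; case: ifP => [/andP [/eqP H1 /eqP H2] | _] Hnz //.
by case: Hnz; ring.
Qed.

Lemma service_rate_val x y i : (forall j, j <> i -> j <> ordS i -> y j = x j) ->
  (y i).1.+1 = (x i).1 -> (y (ordS i)).1 = (x (ordS i)).1.+1 ->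
  service_rate x y i =
  (x i).2 * pminus i (x i) (y i) * pplus (ordS i) (x (ordS i)) (y (ordS i)).
Proof. by move=> Hagree H1 H2; rewrite /service_rate ind_true // H1 H2 !eqxx /=; ring. Qed.

Lemma internal_rate_support x y i : internal_rate x y i <> 0 ->
  (forall j, j <> i -> y j = x j) /\ (y i).1 = (x i).1.
Proof.
rewrite /internal_rate => Hnz.
case: (classic (forall j, j <> i -> y j = x j)) => Hagree;
  last by case: Hnz; rewrite ind_false //; ring.
move: Hnz; case: ifP => [/eqP H1 | _] Hnz //.
by case: Hnz; ring.
Qed.

Lemma internal_rate_val x y i : (forall j, j <> i -> y j = x j) -> (y i).1 = (x i).1 ->
  internal_rate x y i = q0 i (x i) (y i).
Proof. by move=> Hagree H1; rewrite /internal_rate ind_true // H1 eqxx; ring. Qed.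

Hypothesis HEmu : forall i z, E i z -> 0 <= z.2 /\ (z.1 = 0%N -> z.2 = 0).
Hypothesis Hpplus : forall i z, E i z ->
  (forall z', Vplus E i z z' -> 0 <= pplus i z z') /\ has_sum (Vplus E i z) (pplus i z) 1.
Hypothesis Hpminus : forall i z, E i z -> (1 <= z.1)%N ->
  (forall z', Vminus E i z z' -> 0 <= pminus i z z') /\ has_sum (Vminus E i z) (pminus i z) 1.

Lemma outflow_service N x i : Omega E N x ->
  has_sum (fun y => Omega E N y /\ y <> x) (fun y => service_rate x y i) (x i).2.
Proof.
move=> Hx; have Ex := proj1 Hx.
case: (posnP (x i).1) => [Hempty | Hbusy].
  have Hmu0 := proj2 (HEmu _ _ (Ex i)) Hempty.
  by rewrite Hmu0; apply: has_sum_zero => y _; rewrite /service_rate Hmu0; case: ifP => _; ring.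
have [Hm_ge0 Hm] := Hpminus _ _ (Ex i) Hbusy; have [Hp_ge0 Hp] := Hpplus _ _ (Ex (ordS i)).
have := has_sum_scale (x i).2 (has_sum_prod Hm_ge0 Hp_ge0 Hm Hp).
rewrite !Rmult_1_r => Hsum.
apply: (has_sum_two_site (i := i) (Vminus E i (x i)) (Vplus E (ordS i) (x (ordS i)))).
- move=> a b [Ea Ha] [Eb Hb]; split; last by move=> Hax; rewrite Hax in Ha; lia.
  by apply: Omega_set2 => //; rewrite Hb -Ha addSn addnS.
- move=> y [Ey _] _ /service_rate_support [Hagree [H1 H2]].
  by split; [| split; split; [apply: Ey | | apply: Ey | ]].
- apply: has_sum_ext Hsum => // -[a b] [[Ea Ha] [Eb Hb]] /=.
  rewrite service_rate_val ?set2_at ?set2_next //=; first ring.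
  by move=> j; apply: set2_off.
Qed.

Lemma outflow_internal N x i r : Omega E N x ->
  has_sum (Vzero E i (x i)) (q0 i (x i)) r ->
  has_sum (fun y => Omega E N y /\ y <> x) (fun y => internal_rate x y i)
    (r - q0 i (x i) (x i)).
Proof.
move=> Hx Hr; have Ex := proj1 Hx.
apply: (has_sum_one_site (i := i) (Vzero E i (x i))).
- by move=> a [Ea Ha]; apply: Omega_set1.
- move=> y [Ey _] _ /internal_rate_support [Hagree H1].
  by split => //; split => //; apply: Ey.
- apply: has_sum_ext (has_sum_remove (conj (Ex i) erefl) Hr) => // a [[Ea Ha] _].
  by rewrite internal_rate_val ?set1_at // => j; apply: set1_off.
Qed.

Context {lam : R} {pi : 'I_L -> nat * R -> R}.
Hypothesis Hlam : 0 < lam.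
Hypothesis Hpi0 : forall i z, E i z -> 0 <= pi i z.

(* The first
   partial balance equation at queue [i] turns the sum over the former state of
   queue [i] into [lam * pi_i(x_i)], leaving an arrival flow into queue [i+1]. *)
Lemma inflow_service N x i s : Omega E N x ->
  has_sum (Vplus E i (x i)) (fun z => z.2 * pminus i z (x i) * pi i z) (lam * pi i (x i)) ->
  has_sum (Vminus E (ordS i) (x (ordS i)))
    (fun z => lam * pplus (ordS i) z (x (ordS i)) * pi (ordS i) z) s ->
  has_sum (fun y => Omega E N y /\ y <> x)
    (fun y => prod_measure pi y * service_rate y x i) (pi i (x i) * s * prod_except2 pi x i).
Proof.
move=> Hx Hdep Harr; have Ex := proj1 Hx.
have Hdep_ge0 : forall z, Vplus E i (x i) z -> 0 <= z.2 * pminus i z (x i) * pi i z.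
  move=> z [Ez Hz]; apply: Rmult_le_pos; last exact: Hpi0.
  apply: Rmult_le_pos; first exact: (proj1 (HEmu _ _ Ez)).
  have Hbusy : (0 < z.1)%N by rewrite Hz.
  by apply: (proj1 (Hpminus _ _ Ez Hbusy)); split; [apply: Ex | rewrite Hz].
have Harr_ge0 : forall z, Vminus E (ordS i) (x (ordS i)) z ->
    0 <= lam * pplus (ordS i) z (x (ordS i)) * pi (ordS i) z.
  move=> z [Ez Hz]; apply: Rmult_le_pos; last exact: Hpi0.
  apply: Rmult_le_pos; first lra.
  by apply: (proj1 (Hpplus _ _ Ez)); split; [apply: Ex | rewrite Hz].
have := has_sum_scale (prod_except2 pi x i / lam) (has_sum_prod Hdep_ge0 Harr_ge0 Hdep Harr).
have -> : prod_except2 pi x i / lam * (lam * pi i (x i) * s) =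
          pi i (x i) * s * prod_except2 pi x i by field; lra.
move=> Hsum.
apply: (has_sum_two_site (i := i) (Vplus E i (x i)) (Vminus E (ordS i) (x (ordS i)))).
- move=> a b [Ea Ha] [Eb Hb]; split; last by move=> Hax; rewrite Hax in Ha; lia.
  by apply: Omega_set2 => //; rewrite Ha -Hb addSn addnS.
- move=> y [Ey _] _ Hnz.
  have /service_rate_support [Hagree [H1 H2]] : service_rate y x i <> 0.
    by move=> H0; apply: Hnz; rewrite H0; ring.
  split; first by move=> j Hi HS; rewrite Hagree.
  by split; split; rewrite ?H1 ?H2 //; apply: Ey.
- apply: has_sum_ext Hsum => // -[a b] [[Ea Ha] [Eb Hb]].
  rewrite prod_measure_set2 service_rate_val ?set2_at ?set2_next //=; first by field; lra.
  by move=> j Hi HS; rewrite set2_off.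
Qed.

Lemma inflow_internal N x i s : Omega E N x ->
  has_sum (Vzero E i (x i)) (fun z => q0 i z (x i) * pi i z) s ->
  has_sum (fun y => Omega E N y /\ y <> x)
    (fun y => prod_measure pi y * internal_rate y x i)
    ((s - q0 i (x i) (x i) * pi i (x i)) * prod_except1 pi x i).
Proof.
move=> Hx Hs; have Ex := proj1 Hx.
have := has_sum_scale (prod_except1 pi x i) (has_sum_remove (conj (Ex i) erefl) Hs).
rewrite Rmult_comm => Hsum.
apply: (has_sum_one_site (i := i) (Vzero E i (x i))).
- by move=> a [Ea Ha]; apply: Omega_set1.
- move=> y [Ey _] _ Hnz.
  have /internal_rate_support [Hagree H1] : internal_rate y x i <> 0.
    by move=> H0; apply: Hnz; rewrite H0; ring.
  split; first by move=> j Hj; rewrite Hagree.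
  by split; [apply: Ey | rewrite H1].
- apply: has_sum_ext Hsum => // a [[Ea Ha] _].
  rewrite prod_measure_set1 internal_rate_val ?set1_at //; first ring.
  by move=> j Hj; rewrite set1_off.
Qed.

(* After reindexing the service inflows along [i -> i+1], the total inflow into [x]
   equals [prod_measure pi x] times the total outflow rate, provided each queue
   satisfies the second partial balance equation. *)
Lemma balance_identity x (mu r d s2 s3 : 'I_L -> R) :
  (forall i, mu i * pi i (x i) + pi i (x i) * r i = s2 i + s3 i) ->
  \big[Rplus/0]_(i < L) (pi i (x i) * s2 (ordS i) * prod_except2 pi x i) +
  \big[Rplus/0]_(i < L) ((s3 i - d i * pi i (x i)) * prod_except1 pi x i) =
  prod_measure pi x * (\big[Rplus/0]_(i < L) mu i + \big[Rplus/0]_(i < L) (r i - d i)).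
Proof.
move=> Hsite.
have -> : \big[Rplus/0]_(i < L) (pi i (x i) * s2 (ordS i) * prod_except2 pi x i) =
          \big[Rplus/0]_(i < L) (s2 i * prod_except1 pi x i).
  rewrite [RHS](reindex_inj (@ordS_inj L)) /=.
  by apply: eq_bigr => i _; rewrite prod_except1_next; ring.
rewrite -big_split Rmult_plus_distr_l !sumR_scale -big_split /=.
apply: eq_bigr => i _; rewrite (prod_measure_split _ x i).
have -> : s2 i = mu i * pi i (x i) + pi i (x i) * r i - s3 i by rewrite Hsite; ring.
ring.
Qed.

Hypothesis Hfinite : forall i z, E i z -> exists r, has_sum (Vzero E i z) (q0 i z) r.
Hypothesis HPB1 : forall i zi, E i zi ->
  has_sum (Vplus E i zi) (fun z => z.2 * pminus i z zi * pi i z) (lam * pi i zi).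
Hypothesis HPB2 : forall i zi, E i zi ->
  exists s1 s2 s3 : R,
    has_sum (Vzero E i zi) (fun z => q0 i zi z * pi i zi) s1 /\
    has_sum (Vminus E i zi) (fun z => lam * pplus i z zi * pi i z) s2 /\
    has_sum (Vzero E i zi) (fun z => q0 i z zi * pi i z) s3 /\
    zi.2 * pi i zi + s1 = s2 + s3.

(* The second partial balance equation, with the internal outflow written as
   [pi_i(z_i)] times the total internal rate [r] out of [z_i]. *)
Lemma second_partial_balance {i zi r} : E i zi -> has_sum (Vzero E i zi) (q0 i zi) r ->
  exists s : R * R,
    has_sum (Vminus E i zi) (fun z => lam * pplus i z zi * pi i z) s.1 /\
    has_sum (Vzero E i zi) (fun z => q0 i z zi * pi i z) s.2 /\
    zi.2 * pi i zi + pi i zi * r = s.1 + s.2.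
Proof.
move=> Ezi Hr; have [s1 [s2 [s3 [H1 [H2 [H3 Heq]]]]]] := HPB2 _ _ Ezi.
have Hs1 : has_sum (Vzero E i zi) (fun z => q0 i zi z * pi i zi) (pi i zi * r).
  by apply: has_sum_ext (has_sum_scale (pi i zi) Hr) => // z _; ring.
by exists (s2, s3); rewrite (has_sum_unique Hs1 H1).
Qed.

Lemma product_measure_stationary N :
  stationary_on (Omega E N) (q_net pplus pminus q0) (prod_measure pi).
Proof.
move=> x Hx; have Ex := proj1 Hx.
have [r Hr] := ClassicalEpsilon.choice _ (fun i => Hfinite _ _ (Ex i)).
have [s Hs] := ClassicalEpsilon.choice _ (fun i => second_partial_balance (Ex i) (Hr i)).
exists (\big[Rplus/0]_(i < L) (x i).2 + \big[Rplus/0]_(i < L) (r i - q0 i (x i) (x i))).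
split.
- have Hout := has_sum_add
    (has_sum_bigsum (index_enum 'I_L) (fun i => outflow_service _ _ i Hx))
    (has_sum_bigsum (index_enum 'I_L) (fun i => outflow_internal _ _ i _ Hx (Hr i))).
  exact: has_sum_ext Hout.
- have Hin := has_sum_add
    (has_sum_bigsum (index_enum 'I_L) (fun i =>
       inflow_service _ _ i _ Hx (HPB1 _ _ (Ex i)) (proj1 (Hs (ordS i)))))
    (has_sum_bigsum (index_enum 'I_L) (fun i => inflow_internal _ _ i _ Hx (proj1 (proj2 (Hs i))))).
  rewrite (balance_identity x (fun i => (x i).2) r (fun i => q0 i (x i) (x i))
             (fun i => (s i).1) (fun i => (s i).2)) in Hin; last by move=> i; case: (Hs i) => _ [].
  by apply: has_sum_ext Hin => // y _; rewrite q_net_split Rmult_plus_distr_l !sumR_scale.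
Qed.

End TandemNetwork.

Theorem mainTheorem1
  (L : nat) (HL : (2 <= L)%N)
  (E : 'I_L -> nat * R -> Prop)
  (HEcount : forall i, countable_set (E i))
  (HEmu : forall i z, E i z -> 0 <= z.2 /\ (z.1 = 0%N -> z.2 = 0))
  (pplus pminus q0 : 'I_L -> nat * R -> nat * R -> R)
  (Hpplus : forall i z, E i z ->
     (forall z', Vplus E i z z' -> 0 <= pplus i z z') /\
     has_sum (Vplus E i z) (pplus i z) 1)
  (Hpminus : forall i z, E i z -> (1 <= z.1)%N ->
     (forall z', Vminus E i z z' -> 0 <= pminus i z z') /\
     has_sum (Vminus E i z) (pminus i z) 1)
  (Hq0 : forall i z z', E i z -> Vzero E i z z' -> 0 <= q0 i z z')
  (Hfinite : forall i z, E i z -> exists r, has_sum (Vzero E i z) (q0 i z) r)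
  (lam : R) (Hlam : 0 < lam)
  (pi : 'I_L -> nat * R -> R)
  (Hpi : forall i, stationary_distribution (E i) (q_iso pplus pminus q0 lam i) (pi i))
  (HPB1 : forall i zi, E i zi ->
     has_sum (Vplus E i zi) (fun z => z.2 * pminus i z zi * pi i z) (lam * pi i zi))
  (HPB2 : forall i zi, E i zi ->
     exists s1 s2 s3 : R,
       has_sum (Vzero E i zi) (fun z => q0 i zi z * pi i zi) s1 /\
       has_sum (Vminus E i zi) (fun z => lam * pplus i z zi * pi i z) s2 /\
       has_sum (Vzero E i zi) (fun z => q0 i z zi * pi i z) s3 /\
       zi.2 * pi i zi + s1 = s2 + s3) :
  forall (N : nat) (Z : R),
    has_sum (Omega E N) (prod_measure pi) Z -> 0 < Z ->
    stationary_distribution (Omega E N) (q_net pplus pminus q0)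
      (fun x => prod_measure pi x / Z).
Proof.
move=> N Z HZ HZpos.
have Hpi0 : forall i z, E i z -> 0 <= pi i z by move=> i; apply: (proj1 (Hpi i)).
split; [|split].
- move=> x [Ex _]; apply: Rmult_le_pos; first exact: prod_measure_nonneg Hpi0 Ex.
  by left; apply: Rinv_0_lt_compat.
- have := has_sum_scale (/ Z) HZ; rewrite Rinv_l; last lra.
  by apply: has_sum_ext => // x _; rewrite /Rdiv Rmult_comm.
- apply: stationary_on_scale.
  exact: (product_measure_stationary HL HEmu Hpplus Hpminus Hlam Hpi0 Hfinite HPB1 HPB2).
Qed.
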